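(* The following transitive interval exchange transformations exist: (a) for each $f\in\{1,2,3\}$, a transitive $4$-IET with exactly $f$ flips and without fake discontinuities; (b) a transitive $5$-IET with exactly $5$ flips having exactly one fake discontinuity; (c) a transitive $5$-IET with exactly $5$ flips and without fake discontinuities.
   Context: An $n$-IET $T$ of $[0,\ell]$ is given by a partition $0=a_0<\dots<a_n=\ell$, domain intervals $I_i=(a_{i-1},a_i)$, and an injective map $T:\bigcup I_i\to[0,\ell]$ that is an isometry on each $I_i$ and cannot be continuously extended to a larger open set. Let $J_1,\dots,J_n$ be the range intervals, ordered left to right. Define the permutation $\pi$ of $\{1,\dots,n\}$ by $T(I_i)=J_{\pi(i)}$ and $\theta_i=+1$ if $T$ preserves orientation on $I_i$, $\theta_i=-1$ if it reverses it (a flip). $T$ has a fake discontinuity if precisely one of the following happens: (a) for exactly one $1\le i\le n-1$, $\pi(i)=n$, $\pi(i+1)=1$ and $\theta_i=\theta_{i+1}=+1$; (b) for exactly one $1\le i\le n-1$, $\pi(i)=1$, $\pi(i+1)=n$ and $\theta_i=\theta_{i+1}=-1$; (c) $\pi(1)=\pi(n)+1$ and $\theta_1=\theta_n=+1$; (d) $\pi(1)=\pi(n)-1$ and $\theta_1=\theta_n=-1$. $T$ is without fake discontinuities if none of (a)–(d) occurs. $T$ is transitive if some orbit $\{T^m(p): m\in\mathbb{Z},\ p\in\mathrm{Dom}(T^m)\}$ is dense in $[0,\ell]$. *)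

From Stdlib Require Import Reals Lra Lia Arith.
Open Scope R_scope.

Fixpoint sumR (f : nat -> R) (n : nat) : R :=
  match n with
  | O => 0
  | S k => sumR f k + f (S k)
  end.

Fixpoint countb (p : nat -> bool) (n : nat) : nat :=
  match n with
  | O => O
  | S k => (countb p k + (if p (S k) then 1 else 0))%nat
  end.

(* Combinatorial data of an n-IET (indices 1..n):
   lam i  = length of the domain interval I_i,
   pi     = the permutation, T(I_i) = J_(pi i),
   flip i = true iff theta_i = -1 (T reverses orientation on I_i). *)
Record IET := mkIET {
  nI : nat;
  lam : nat -> R;
  pi : nat -> nat;
  flip : nat -> bool
}.

Definition len (T : IET) : R := sumR (lam T) (nI T).

Definition apt (T : IET) (i : nat) : R := sumR (lam T) i.

(* right endpoint of the range interval J_k (left endpoint is bpt (k-1)):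
   the J_k are ordered left to right, |J_(pi i)| = |I_i| *)
Definition bpt (T : IET) (k : nat) : R :=
  sumR (fun j => if Nat.leb (pi T j) k then lam T j else 0) (nI T).

(* the map T : union of I_i -> [0,l], as a (functional) relation T x = y *)
Definition Tmap (T : IET) (x y : R) : Prop :=
  exists i : nat, (1 <= i <= nI T)%nat /\
    apt T (i - 1) < x < apt T i /\
    y = (if flip T i
         then bpt T (pi T i) - (x - apt T (i - 1))
         else bpt T (pi T i - 1) + (x - apt T (i - 1))).

Definition IET_data_ok (T : IET) : Prop :=
  (forall i, (1 <= i <= nI T)%nat -> 0 < lam T i) /\
  (forall i, (1 <= i <= nI T)%nat -> (1 <= pi T i <= nI T)%nat) /\
  (forall i j, (1 <= i <= nI T)%nat -> (1 <= j <= nI T)%nat ->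
      pi T i = pi T j -> i = j).

(* T cannot be continuously extended to a larger open set: at no interior
   partition point a_i (1 <= i <= n-1) does T have a limit. *)
Definition not_extendable (T : IET) : Prop :=
  forall i, (1 <= i <= nI T - 1)%nat ->
    ~ (exists y : R, forall eps, 0 < eps -> exists delta, 0 < delta /\
         forall x z, Tmap T x z -> x <> apt T i -> Rabs (x - apt T i) < delta ->
           Rabs (z - y) < eps).

Definition is_IET (T : IET) : Prop := IET_data_ok T /\ not_extendable T.

Definition nflips (T : IET) : nat := countb (flip T) (nI T).

Fixpoint iter_rel (F : R -> R -> Prop) (m : nat) (x y : R) : Prop :=
  match m with
  | O => x = y
  | S k => exists z, F x z /\ iter_rel F k z y
  end.

(* the orbit {T^m(p) : m in Z, p in Dom(T^m)}; T^(-m)(p) = q iff T^m(q) = p *)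
Definition orbit (T : IET) (p q : R) : Prop :=
  exists m : nat, iter_rel (Tmap T) m p q \/ iter_rel (Tmap T) m q p.

Definition dense_in_0l (T : IET) (S : R -> Prop) : Prop :=
  forall x, 0 <= x <= len T -> forall eps, 0 < eps ->
    exists q, S q /\ Rabs (q - x) < eps.

Definition transitive (T : IET) : Prop :=
  exists p, 0 <= p <= len T /\ dense_in_0l T (orbit T p).

Definition fakeA (T : IET) : Prop :=
  exists! i : nat, (1 <= i <= nI T - 1)%nat /\ pi T i = nI T /\ pi T (S i) = 1%nat
    /\ flip T i = false /\ flip T (S i) = false.
Definition fakeB (T : IET) : Prop :=
  exists! i : nat, (1 <= i <= nI T - 1)%nat /\ pi T i = 1%nat /\ pi T (S i) = nI T
    /\ flip T i = true /\ flip T (S i) = true.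
Definition fakeC (T : IET) : Prop :=
  pi T 1 = S (pi T (nI T)) /\ flip T 1 = false /\ flip T (nI T) = false.
Definition fakeD (T : IET) : Prop :=
  S (pi T 1) = pi T (nI T) /\ flip T 1 = true /\ flip T (nI T) = true.

Definition has_fake_discontinuity (T : IET) : Prop :=
  (fakeA T /\ ~ fakeB T /\ ~ fakeC T /\ ~ fakeD T) \/
  (~ fakeA T /\ fakeB T /\ ~ fakeC T /\ ~ fakeD T) \/
  (~ fakeA T /\ ~ fakeB T /\ fakeC T /\ ~ fakeD T) \/
  (~ fakeA T /\ ~ fakeB T /\ ~ fakeC T /\ fakeD T).

Definition without_fake_discontinuities (T : IET) : Prop :=
  ~ fakeA T /\ ~ fakeB T /\ ~ fakeC T /\ ~ fakeD T.

From Stdlib Require Import Reals Lra Lia ZArith List.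
Import ListNotations.
Open Scope R_scope.

(* All five examples are built on the golden number alpha = (sqrt 5 - 1) / 2.
   Each contains a window (c, c + 1), with c in Z + Z alpha, on which the first
   return map of T is the rotation x |-> x + alpha mod 1 (away from Z + Z alpha,
   where the itineraries may change).  Odd powers of alpha are arbitrarily small
   positive elements of N alpha - N, so the forward multiples of alpha are dense
   modulo 1; as alpha is irrational, the orbit of the midpoint of the window never
   meets Z + Z alpha, hence it is dense in the window.  Finitely many isometric
   pieces of the window, each carried along a fixed itinerary of T, have images
   sweeping [0, l], and they spread this density over the whole interval.  T is
   not extendable because it jumps at every interior partition point. *)

Definition alpha : R := (sqrt 5 - 1) / 2.

Lemma alpha_sq : alpha * alpha = 1 - alpha.
Proof.
  unfold alpha. pose proof (sqrt_sqrt 5 ltac:(lra)). nra.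
Qed.

Lemma alpha_approx : 0.6180339 < alpha < 0.6180340.
Proof.
  unfold alpha. pose proof (sqrt_sqrt 5 ltac:(lra)). pose proof (sqrt_pos 5).
  split; nra.
Qed.

(* Infinite descent: if [p alpha = q] with [0 < p], then [0 < q < p] and [q alpha = p - q]. *)
Lemma alpha_irrational (m n : Z) : m <> 0%Z -> IZR m * alpha <> IZR n.
Proof.
  pose proof alpha_approx.
  assert (Hpos : forall p, (0 <= p)%Z -> (0 < p)%Z -> forall q, IZR p * alpha <> IZR q).
  { intros p0 Hp0. pattern p0. apply Z_lt_induction; [| exact Hp0].
    intros p IH Hp q Hpq.
    assert (Hq : (0 < q < p)%Z).
    { assert (0 < IZR p) by (apply IZR_lt; lia). split; apply lt_IZR; nra. }
    apply (IH q ltac:(lia) ltac:(lia) (p - q)%Z).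
    rewrite minus_IZR, <- Hpq, Rmult_assoc, alpha_sq. ring. }
  intros Hm Hmn. destruct (Z_lt_le_dec 0 m) as [Hm0 | Hm0].
  - exact (Hpos m ltac:(lia) Hm0 n Hmn).
  - apply (Hpos (- m)%Z ltac:(lia) ltac:(lia) (- n)%Z).
    rewrite !opp_IZR, <- Hmn. ring.
Qed.

Definition golden_lattice (x : R) : Prop := exists a b : Z, x = IZR a + IZR b * alpha.

Lemma half_off_lattice (x : R) : golden_lattice x -> ~ golden_lattice (x + 1 / 2).
Proof.
  intros [a [b ->]] [a' [b' H]].
  destruct (Z.eq_dec b b') as [<- | Hb].
  - assert (Ha : IZR (2 * (a' - a)) = IZR 1) by (rewrite mult_IZR, minus_IZR; lra).
    apply eq_IZR in Ha. lia.
  - apply (alpha_irrational (2 * (b - b')) (2 * (a' - a) - 1)); [lia |].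
    repeat rewrite ?mult_IZR, ?minus_IZR. lra.
Qed.

Lemma off_lattice_split (x : R) (a b : Z) : ~ golden_lattice x ->
  x < IZR a + IZR b * alpha \/ IZR a + IZR b * alpha < x.
Proof.
  intro Hx. destruct (Rtotal_order x (IZR a + IZR b * alpha)) as [H | [H | H]]; auto.
  exfalso. apply Hx. exists a, b. exact H.
Qed.

Lemma alpha_odd_power (j : nat) : exists N K : nat, alpha ^ (2 * j + 1) = INR N * alpha - INR K.
Proof.
  induction j as [|j [N [K IH]]].
  - exists 1%nat, 0%nat. simpl. ring.
  - exists (2 * N + K)%nat, (N + K)%nat.
    replace (2 * S j + 1)%nat with (2 + (2 * j + 1))%nat by lia.
    rewrite pow_add, IH, !plus_INR, !mult_INR. simpl.
    replace (alpha * (alpha * 1)) with (1 - alpha) by (rewrite <- alpha_sq; ring).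
    replace ((1 - alpha) * (INR N * alpha - INR K))
      with (INR N * alpha - INR K - INR N * (alpha * alpha) + INR K * alpha) by ring.
    rewrite alpha_sq. ring.
Qed.

Lemma alpha_small_combination (e : R) : 0 < e -> exists N K : nat, 0 < INR N * alpha - INR K < e.
Proof.
  intro He. pose proof alpha_approx.
  assert (Ha : Rabs alpha < 1) by (rewrite Rabs_right; lra).
  destruct (pow_lt_1_zero alpha Ha e He) as [n Hn].
  destruct (alpha_odd_power n) as [N [K HNK]].
  exists N, K. rewrite <- HNK. split.
  - apply pow_lt. lra.
  - specialize (Hn (2 * n + 1)%nat ltac:(lia)).
    rewrite Rabs_right in Hn; [exact Hn |]. left. apply pow_lt. lra.
Qed.

Lemma exists_multiple_in_step (d t : R) : 0 < d -> 0 <= t -> exists j : nat, t < INR j * d <= t + d.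
Proof.
  intros Hd Ht. destruct (INR_archimed d t Hd) as [n Hn].
  induction n as [|n IH].
  - simpl in Hn. lra.
  - rewrite S_INR in Hn.
    destruct (Rlt_le_dec t (INR n * d)) as [Hlt | Hle].
    + exact (IH Hlt).
    + exists (S n). rewrite S_INR. lra.
Qed.

Lemma alpha_orbit_dense (p u v : R) : u < v ->
  exists (M : nat) (k : Z), u < p + INR M * alpha - IZR k < v.
Proof.
  intro Huv.
  destruct (alpha_small_combination (v - u) ltac:(lra)) as [N [K HNK]].
  set (d := INR N * alpha - INR K) in HNK.
  destruct (archimed (p - u)) as [Hup _].
  set (m := up (p - u)) in Hup.
  destruct (exists_multiple_in_step d (u + IZR m - p) ltac:(lra) ltac:(lra)) as [j Hj].
  exists (j * N)%nat, (Z.of_nat (j * K) + m)%Z.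
  rewrite plus_IZR, <- INR_IZR_INZ, !mult_INR.
  replace (p + INR j * INR N * alpha - (INR j * INR K + IZR m))
    with (p + INR j * d - IZR m) by (unfold d; ring).
  lra.
Qed.

Definition reaches (T : IET) (x y : R) : Prop := exists m, iter_rel (Tmap T) m x y.

Lemma reaches_eq (T : IET) (x y : R) : x = y -> reaches T x y.
Proof. intro H. exists O. exact H. Qed.

Lemma reaches_step (T : IET) (x z y : R) : Tmap T x z -> reaches T z y -> reaches T x y.
Proof. intros H [m Hm]. exists (S m), z. auto. Qed.

Lemma iter_rel_add (F : R -> R -> Prop) (m k : nat) (x y z : R) :
  iter_rel F m x y -> iter_rel F k y z -> iter_rel F (m + k) x z.
Proof.
  revert x. induction m as [|m IH]; intros x H1 H2; simpl in *.
  - subst. exact H2.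
  - destruct H1 as [w [Hxw Hwy]]. exists w. auto.
Qed.

Lemma reaches_trans (T : IET) (x y z : R) : reaches T x y -> reaches T y z -> reaches T x z.
Proof. intros [m Hm] [k Hk]. exists (m + k)%nat. exact (iter_rel_add _ _ _ _ _ _ Hm Hk). Qed.

(* [Piece a b rev t] is the isometry [x |-> t - x] (if [rev]) or [x |-> x + t] on [(a, b)]. *)
Record piece := Piece { pa : R; pb : R; prev : bool; pt : R }.

Definition piece_map (q : piece) (x : R) : R := if prev q then pt q - x else x + pt q.
Definition piece_lo (q : piece) : R := if prev q then pt q - pb q else pa q + pt q.
Definition piece_hi (q : piece) : R := if prev q then pt q - pa q else pb q + pt q.

Lemma piece_map_dist (q : piece) (x y : R) :
  Rabs (piece_map q x - piece_map q y) = Rabs (x - y).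
Proof.
  unfold piece_map. destruct (prev q).
  - rewrite <- Rabs_Ropp. f_equal. ring.
  - f_equal. ring.
Qed.

Lemma piece_preimage (q : piece) (y : R) : piece_lo q <= y <= piece_hi q ->
  exists y0, pa q <= y0 <= pb q /\ piece_map q y0 = y.
Proof.
  unfold piece_lo, piece_hi, piece_map. destruct (prev q); intro Hy.
  - exists (pt q - y). split; [lra | ring].
  - exists (y - pt q). split; [lra | ring].
Qed.

Fixpoint covers (ps : list piece) (u v : R) : Prop :=
  match ps with
  | [] => False
  | q :: ps' => piece_lo q <= u /\ (v <= piece_hi q \/ covers ps' (piece_hi q) v)
  end.

Lemma covers_In (ps : list piece) (u v y : R) : covers ps u v -> u <= y <= v ->
  exists q, In q ps /\ piece_lo q <= y <= piece_hi q.
Proof.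
  revert u. induction ps as [|q ps IH]; intros u Hcov Hy; [contradiction |].
  destruct Hcov as [Hlo Hrest].
  destruct (Rle_lt_dec y (piece_hi q)) as [Hle | Hlt].
  - exists q. split; [left; reflexivity | lra].
  - destruct Hrest as [Hv | Hcov]; [lra |].
    destruct (IH (piece_hi q) Hcov ltac:(lra)) as [q' [Hin Hq']].
    exists q'. split; [right; exact Hin | exact Hq'].
Qed.

Definition window_piece (T : IET) (c : R) (q : piece) : Prop :=
  (c <= pa q /\ pa q < pb q /\ pb q <= c + 1) /\
  forall x, pa q < x < pb q -> reaches T x (piece_map q x).

Section GoldenWindow.

Variables (T : IET) (c : R).

Hypothesis c_on_lattice : golden_lattice c.
Hypothesis rotate_left :
  forall x, ~ golden_lattice x -> c < x < c + 1 - alpha -> reaches T x (x + alpha).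
Hypothesis rotate_right :
  forall x, ~ golden_lattice x -> c + 1 - alpha < x < c + 1 -> reaches T x (x + alpha - 1).

Lemma window_orbit_off_lattice (M : nat) (k : Z) :
  ~ golden_lattice (c + 1 / 2 + INR M * alpha - IZR k).
Proof.
  replace (c + 1 / 2 + INR M * alpha - IZR k) with (c + INR M * alpha - IZR k + 1 / 2) by ring.
  apply half_off_lattice. destruct c_on_lattice as [a [b ->]].
  exists (a - k)%Z, (b + Z.of_nat M)%Z. rewrite minus_IZR, plus_IZR, <- INR_IZR_INZ. ring.
Qed.

Lemma window_orbit (M : nat) (k : Z) :
  c < c + 1 / 2 + INR M * alpha - IZR k < c + 1 ->
  reaches T (c + 1 / 2) (c + 1 / 2 + INR M * alpha - IZR k).
Proof.
  pose proof alpha_approx. revert k. induction M as [|M IH]; intros k Hk.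
  - simpl in Hk. assert (Hk0 : k = 0%Z).
    { assert (IZR k < IZR 1) by lra. assert (IZR (-1) < IZR k) by lra.
      apply lt_IZR in H0. apply lt_IZR in H1. lia. }
    subst k. apply reaches_eq. simpl. ring.
  - rewrite S_INR in *. set (x := c + 1 / 2 + INR M * alpha - IZR k) in *.
    destruct (Rtotal_order x c) as [Hx | [Hx | Hx]].
    + eapply reaches_trans.
      { apply (IH (k - 1)%Z). rewrite minus_IZR. unfold x in *. lra. }
      replace (c + 1 / 2 + (INR M + 1) * alpha - IZR k)
        with (c + 1 / 2 + INR M * alpha - IZR (k - 1) + alpha - 1)
        by (rewrite minus_IZR; ring).
      apply rotate_right; [apply window_orbit_off_lattice |].
      rewrite minus_IZR. unfold x in *. lra.
    + exfalso. apply (window_orbit_off_lattice M k). fold x. rewrite Hx. exact c_on_lattice.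
    + eapply reaches_trans; [apply (IH k); unfold x in *; lra |].
      replace (c + 1 / 2 + (INR M + 1) * alpha - IZR k) with (x + alpha) by (unfold x; ring).
      apply rotate_left; [apply window_orbit_off_lattice | unfold x in *; lra].
Qed.

Lemma golden_window_transitive (ps : list piece) :
  0 <= c -> c + 1 <= len T -> Forall (window_piece T c) ps -> covers ps 0 (len T) ->
  transitive T.
Proof.
  intros Hc0 Hc1 Hps Hcov. exists (c + 1 / 2). split; [lra |].
  intros y Hy e He.
  destruct (covers_In ps 0 (len T) y Hcov Hy) as [q [Hq Hyq]].
  rewrite Forall_forall in Hps. destruct (Hps q Hq) as [Hwin Hreach].
  destruct (piece_preimage q y Hyq) as [y0 [Hy0 <-]].
  destruct (alpha_orbit_dense (c + 1 / 2) (Rmax (pa q) (y0 - e)) (Rmin (pb q) (y0 + e)))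
    as [M [k Hx]].
  { unfold Rmax, Rmin. repeat destruct Rle_dec; lra. }
  set (x := c + 1 / 2 + INR M * alpha - IZR k) in Hx.
  assert (Hxq : pa q < x < pb q /\ Rabs (x - y0) < e).
  { pose proof (Rmax_l (pa q) (y0 - e)). pose proof (Rmax_r (pa q) (y0 - e)).
    pose proof (Rmin_l (pb q) (y0 + e)). pose proof (Rmin_r (pb q) (y0 + e)).
    split; [lra | apply Rabs_def1; lra]. }
  exists (piece_map q x). split.
  - destruct (reaches_trans T _ _ _ (window_orbit M k ltac:(unfold x in *; lra))
                (Hreach x (proj1 Hxq))) as [m Hm].
    exists m. left. exact Hm.
  - rewrite piece_map_dist. tauto.
Qed.

End GoldenWindow.

Definition img (T : IET) (i : nat) (x : R) : R :=
  if flip T i then bpt T (pi T i) - (x - apt T (i - 1))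
  else bpt T (pi T i - 1) + (x - apt T (i - 1)).

Lemma Tmap_img (T : IET) (i : nat) (x : R) :
  (1 <= i <= nI T)%nat -> apt T (i - 1) < x < apt T i -> Tmap T x (img T i x).
Proof. intros Hi Hx. exists i. auto. Qed.

Lemma img_dist (T : IET) (i : nat) (x x' : R) : Rabs (img T i x - img T i x') = Rabs (x - x').
Proof.
  unfold img. destruct (flip T i).
  - rewrite <- Rabs_Ropp. f_equal. ring.
  - f_equal. ring.
Qed.

Lemma apt_pred (T : IET) (i : nat) : (1 <= i)%nat -> apt T i = apt T (i - 1) + lam T i.
Proof. intro Hi. destruct i as [|i]; [lia |]. simpl. rewrite Nat.sub_0_r. reflexivity. Qed.

(* The one-sided limits of [T] at [a_i] are [img T i a_i] and [img T (i+1) a_i]. *)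
Lemma no_limit_at_jump (T : IET) (i : nat) :
  (1 <= i <= nI T - 1)%nat -> 0 < lam T i -> 0 < lam T (S i) ->
  img T i (apt T i) <> img T (S i) (apt T i) ->
  ~ (exists y : R, forall eps, 0 < eps -> exists delta, 0 < delta /\
       forall x z, Tmap T x z -> x <> apt T i -> Rabs (x - apt T i) < delta ->
         Rabs (z - y) < eps).
Proof.
  intros Hi Hl Hr Hjump [y Hy].
  set (a := apt T i) in *. set (L := img T i a) in *. set (R' := img T (S i) a) in *.
  set (gap := Rabs (L - R')).
  assert (Hgap : 0 < gap) by (apply Rabs_pos_lt; lra).
  destruct (Hy (gap / 4) ltac:(lra)) as [delta [Hdelta Hnear]].
  assert (Hd : exists d, 0 < d /\ d < delta /\ d < gap / 4 /\ d < lam T i /\ d < lam T (S i)).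
  { exists (Rmin (Rmin delta (gap / 4)) (Rmin (lam T i) (lam T (S i))) / 2).
    unfold Rmin. repeat destruct Rle_dec; lra. }
  destruct Hd as [d (Hd0 & Hd1 & Hd2 & Hd3 & Hd4)].
  pose proof (apt_pred T i ltac:(lia)) as Ha.
  assert (Hleft : Rabs (img T i (a - d) - y) < gap / 4).
  { apply (Hnear (a - d)); [apply Tmap_img; unfold a in *; [lia | lra] | lra |].
    rewrite Rabs_left; lra. }
  assert (Hright : Rabs (img T (S i) (a + d) - y) < gap / 4).
  { apply (Hnear (a + d)); [| lra | rewrite Rabs_right; lra].
    apply Tmap_img; [lia |]. replace (S i - 1)%nat with i by lia.
    unfold a. change (apt T (S i)) with (apt T i + lam T (S i)). lra. }
  assert (HL : Rabs (img T i (a - d) - L) = d)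
    by (unfold L; rewrite img_dist; replace (a - d - a) with (- d) by ring;
        rewrite Rabs_Ropp; apply Rabs_right; lra).
  assert (HR : Rabs (img T (S i) (a + d) - R') = d)
    by (unfold R'; rewrite img_dist; replace (a + d - a) with d by ring; apply Rabs_right; lra).
  assert (Htri : gap <= Rabs (img T i (a - d) - L) + Rabs (img T i (a - d) - y)
                      + Rabs (img T (S i) (a + d) - y) + Rabs (img T (S i) (a + d) - R')).
  { unfold gap, Rabs. repeat destruct Rcase_abs; lra. }
  lra.
Qed.

Lemma is_IET_of_jumps (T : IET) : IET_data_ok T ->
  (forall i, (1 <= i <= nI T - 1)%nat -> img T i (apt T i) <> img T (S i) (apt T i)) ->
  is_IET T.
Proof.
  intros Hok Hjumps. split; [exact Hok |].
  intros i Hi. destruct Hok as [Hlam _].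
  apply no_limit_at_jump; [exact Hi | apply Hlam; lia | apply Hlam; lia | apply Hjumps, Hi].
Qed.

Definition iet_of (lengths : list R) (perm : list nat) (flips : list bool) : IET :=
  mkIET (length lengths) (fun i => nth (i - 1) lengths 0)
    (fun i => nth (i - 1) perm 0%nat) (fun i => nth (i - 1) flips false).

Ltac golden_lra := unfold img, apt, bpt, len, piece_map; simpl; pose proof alpha_approx; lra.

Ltac index_cases i :=
  destruct i as [|i]; [try (exfalso; lia) | first [exfalso; lia | index_cases i]].

Ltac prove_is_IET :=
  apply is_IET_of_jumps;
  [ split; [| split];
    [ intros i Hi; simpl in Hi; index_cases i; golden_lra
    | intros i Hi; simpl in Hi; index_cases i; simpl; lia
    | intros i j Hi Hj; simpl in Hi, Hj; index_cases i; index_cases j; simpl; lia ]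
  | intros i Hi; simpl in Hi; index_cases i; golden_lra ].

Ltac refute_fake_jump :=
  let i := fresh "i" in
  intros [i [(Hi & H1 & H2 & H3 & H4) _]]; simpl in Hi; index_cases i; simpl in *; congruence.

Ltac refute_fake_ends := intros (H1 & H2 & H3); simpl in *; congruence.

Ltac prove_no_fake :=
  split; [refute_fake_jump | split; [refute_fake_jump | split; refute_fake_ends]].

(* [follow [i1; ...; ik]] proves [reaches T x y] along the itinerary I_i1, ..., I_ik. *)
Ltac follow itinerary :=
  lazymatch itinerary with
  | nil => apply reaches_eq; golden_lra
  | cons ?i ?rest =>
      eapply reaches_step; [apply (Tmap_img _ i); [simpl; lia | golden_lra] | follow rest]
  end.

Ltac reach_pieces itineraries :=
  lazymatch itineraries with
  | nil => constructor
  | cons ?l ?rest =>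
      constructor;
      [ split; [simpl; pose proof alpha_approx; repeat split; lra
               | intros x Hx; simpl in Hx |- *; follow l]
      | reach_pieces rest ]
  end.

Ltac check_cover :=
  simpl; unfold len, piece_lo, piece_hi; simpl; pose proof alpha_approx;
  repeat (split; [lra | first [left; lra | right]]).

Definition iet4_1flip : IET :=
  iet_of [alpha; 1 - alpha; 1; 2] [3; 2; 4; 1]%nat [false; false; false; true].

Definition iet4_1flip_cover : list piece :=
  [Piece (2 - alpha) 2 true 2; Piece 1 (2 - alpha) true 2;
   Piece 1 (2 - alpha) false 0; Piece (2 - alpha) 2 false 0;
   Piece 1 (2 - alpha) true (4 - alpha); Piece (2 - alpha) 2 true (5 - alpha);
   Piece 1 (2 - alpha) false 2; Piece (2 - alpha) 2 false 2].

Lemma iet4_1flip_is_IET : is_IET iet4_1flip.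
Proof. prove_is_IET. Qed.

Lemma iet4_1flip_transitive : transitive iet4_1flip.
Proof.
  apply golden_window_transitive with (c := 1) (ps := iet4_1flip_cover).
  - exists 1%Z, 0%Z. ring.
  - intros x _ Hx. follow [3; 4; 2; 4]%nat.
  - intros x _ Hx. follow [3; 4; 1; 4]%nat.
  - lra.
  - golden_lra.
  - reach_pieces [[3; 4]; [3; 4]; []; []; [3; 4; 2]; [3; 4; 1]; [3]; [3]]%nat.
  - check_cover.
Qed.

Definition iet4_2flips : IET :=
  iet_of [alpha; 1 - alpha; alpha; 1 - alpha] [2; 4; 1; 3]%nat [true; false; true; false].

Definition iet4_2flips_cover : list piece :=
  [Piece 1 (1 + alpha) true (1 + alpha); Piece alpha 1 false 0;
   Piece 1 (1 + alpha) false 0; Piece alpha 1 false 1].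

Lemma iet4_2flips_is_IET : is_IET iet4_2flips.
Proof. prove_is_IET. Qed.

Lemma iet4_2flips_transitive : transitive iet4_2flips.
Proof.
  apply golden_window_transitive with (c := alpha) (ps := iet4_2flips_cover).
  - exists 0%Z, 1%Z. ring.
  - intros x _ Hx. follow [2; 4]%nat.
  - intros x _ Hx. follow [3; 1]%nat.
  - golden_lra.
  - golden_lra.
  - reach_pieces [[3]; []; []; [2]]%nat.
  - check_cover.
Qed.

Definition iet4_3flips : IET :=
  iet_of [alpha; 3; 1 - alpha; 1] [2; 3; 4; 1]%nat [true; false; true; true].

Definition iet4_3flips_cover : list piece :=
  [Piece (5 - alpha) 5 true 5; Piece 4 (5 - alpha) true 5;
   Piece (5 - alpha) 5 false (alpha - 4); Piece 4 (5 - alpha) true 6;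
   Piece (5 - alpha) 5 false (alpha - 3); Piece 4 (5 - alpha) true 7;
   Piece (5 - alpha) 5 false (alpha - 2); Piece 4 (5 - alpha) true 8;
   Piece 4 (5 - alpha) false 0; Piece (5 - alpha) 5 false 0].

Lemma iet4_3flips_is_IET : is_IET iet4_3flips.
Proof. prove_is_IET. Qed.

Lemma iet4_3flips_transitive : transitive iet4_3flips.
Proof.
  apply golden_window_transitive with (c := 4) (ps := iet4_3flips_cover).
  - exists 4%Z, 0%Z. ring.
  - intros x _ Hx. follow [4; 2; 2; 2; 3]%nat.
  - intros x _ Hx. follow [4; 1; 2; 2; 2]%nat.
  - lra.
  - golden_lra.
  - reach_pieces [[4]; [4]; [4; 1]; [4; 2]; [4; 1; 2]; [4; 2; 2]; [4; 1; 2; 2]; [4; 2; 2; 2];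
                  []; []]%nat.
  - check_cover.
Qed.

Definition iet5_no_fake : IET :=
  iet_of [2 - 2 * alpha; 1; 2 * alpha; 3 - 3 * alpha; 3 * alpha] [3; 4; 5; 1; 2]%nat
    [true; true; true; true; true].

Definition iet5_no_fake_cover : list piece :=
  [Piece (5 - 2 * alpha) (6 - 3 * alpha) true (6 - 3 * alpha);
   Piece (5 - 2 * alpha) (6 - 3 * alpha) true (7 - 4 * alpha);
   Piece (5 - 2 * alpha) (6 - 3 * alpha) true (8 - 5 * alpha);
   Piece (6 - 3 * alpha) (6 - 2 * alpha) true (9 - 5 * alpha);
   Piece (6 - 3 * alpha) (6 - 2 * alpha) true (9 - 4 * alpha);
   Piece (6 - 3 * alpha) (6 - 2 * alpha) true (9 - 3 * alpha);
   Piece (5 - 2 * alpha) (6 - 3 * alpha) false (2 * alpha - 2);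
   Piece (5 - 2 * alpha) (6 - 3 * alpha) false (alpha - 1);
   Piece (5 - 2 * alpha) (6 - 3 * alpha) false 0;
   Piece (6 - 3 * alpha) (6 - 2 * alpha) false 0;
   Piece (6 - 3 * alpha) (6 - 2 * alpha) false alpha;
   Piece (6 - 3 * alpha) (6 - 2 * alpha) false (2 * alpha)].

Lemma iet5_no_fake_is_IET : is_IET iet5_no_fake.
Proof. prove_is_IET. Qed.

Lemma iet5_no_fake_transitive : transitive iet5_no_fake.
Proof.
  apply golden_window_transitive with (c := 5 - 2 * alpha) (ps := iet5_no_fake_cover).
  - exists 5%Z, (-2)%Z. ring.
  - intros x _ Hx. follow [4; 1; 4; 1; 4; 2]%nat.
  - intros x _ Hx. follow [5; 3; 5; 3; 5; 2]%nat.
  - golden_lra.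
  - golden_lra.
  - reach_pieces [[4]; [4; 1; 4]; [4; 1; 4; 1; 4]; [5; 3; 5; 3; 5]; [5; 3; 5]; [5];
                  [4; 1; 4; 1]; [4; 1]; []; []; [5; 3]; [5; 3; 5; 3]]%nat.
  - check_cover.
Qed.

Definition iet5_one_fake : IET :=
  iet_of [2 - 2 * alpha; 2 * alpha; 1 - alpha; alpha; 1] [3; 5; 1; 2; 4]%nat
    [true; true; true; true; true].

Definition iet5_one_fake_cover : list piece :=
  [Piece 0 (1 - alpha) false 0; Piece (1 - alpha) (2 - 2 * alpha) false 0;
   Piece (2 - 2 * alpha) 1 false 0; Piece (1 - alpha) (2 - 2 * alpha) true (3 - 2 * alpha);
   Piece 0 (1 - alpha) true (3 - 2 * alpha); Piece (2 - 2 * alpha) 1 false 1;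
   Piece (1 - alpha) (2 - 2 * alpha) true (4 - 2 * alpha);
   Piece 0 (1 - alpha) true (4 - 2 * alpha); Piece (2 - 2 * alpha) 1 true (5 - 2 * alpha);
   Piece 0 (1 - alpha) false 3; Piece (1 - alpha) (2 - 2 * alpha) false 3;
   Piece (2 - 2 * alpha) 1 true (6 - 2 * alpha)].

Lemma iet5_one_fake_is_IET : is_IET iet5_one_fake.
Proof. prove_is_IET. Qed.

Lemma iet5_one_fake_transitive : transitive iet5_one_fake.
Proof.
  apply golden_window_transitive with (c := 0) (ps := iet5_one_fake_cover).
  - exists 0%Z, 0%Z. ring.
  - intros x _ Hx. follow [1; 2; 5; 4]%nat.
  - intros x Hoff Hx.
    destruct (off_lattice_split x 2 (-2) Hoff) as [Hlt | Hgt].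
    + follow [1; 2; 5; 3]%nat.
    + follow [2; 5; 2; 4]%nat.
  - lra.
  - golden_lra.
  - reach_pieces [[]; []; []; [1]; [1]; [2; 5]; [1; 2; 5]; [1; 2; 5]; [2; 5; 2]; [1; 2]; [1; 2];
                  [2]]%nat.
  - check_cover.
Qed.

Lemma iet5_one_fake_has_fake_discontinuity : has_fake_discontinuity iet5_one_fake.
Proof.
  right; right; right.
  split; [refute_fake_jump | split; [refute_fake_jump | split; [refute_fake_ends |]]].
  split; [reflexivity | split; reflexivity].
Qed.

Theorem lemma9p3 :
  (forall f : nat, (1 <= f <= 3)%nat ->
     exists T : IET, nI T = 4%nat /\ is_IET T /\ nflips T = f /\
       without_fake_discontinuities T /\ transitive T) /\
  (exists T : IET, nI T = 5%nat /\ is_IET T /\ nflips T = 5%nat /\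
       has_fake_discontinuity T /\ transitive T) /\
  (exists T : IET, nI T = 5%nat /\ is_IET T /\ nflips T = 5%nat /\
       without_fake_discontinuities T /\ transitive T).
Proof.
  split; [| split].
  - intros f Hf. assert (Hcases : f = 1%nat \/ f = 2%nat \/ f = 3%nat) by lia.
    destruct Hcases as [-> | [-> | ->]].
    + exists iet4_1flip. do 3 (split; [try reflexivity; exact iet4_1flip_is_IET |]).
      split; [prove_no_fake | exact iet4_1flip_transitive].
    + exists iet4_2flips. do 3 (split; [try reflexivity; exact iet4_2flips_is_IET |]).
      split; [prove_no_fake | exact iet4_2flips_transitive].
    + exists iet4_3flips. do 3 (split; [try reflexivity; exact iet4_3flips_is_IET |]).
      split; [prove_no_fake | exact iet4_3flips_transitive].
  - exists iet5_one_fake. do 3 (split; [try reflexivity; exact iet5_one_fake_is_IET |]).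
    split; [exact iet5_one_fake_has_fake_discontinuity | exact iet5_one_fake_transitive].
  - exists iet5_no_fake. do 3 (split; [try reflexivity; exact iet5_no_fake_is_IET |]).
    split; [prove_no_fake | exact iet5_no_fake_transitive].
Qed.
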